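(* Let $\mathbf v\in E^*_{[s,t]}V$ be nonzero with $L_1\mathbf v=L_2\mathbf v=\mathbf 0$, let $r=d-s-t$, $m_1=r-s$, $m_2=s-t$. Then $m_1,m_2\ge 0$, i.e. $r\ge s\ge t$, and: (i) $(r,s,t)=(m_1+m_2+t,\;m_2+t,\;t)$; (ii) $t\in\{0,1,\dots,\lfloor d/3\rfloor\}$; (iii) $m_1=d-3t-2m_2$; (iv) $m_2\in\{0,1,\dots,\lfloor (d-3t)/2\rfloor\}$.
   Context: Let $d\ge1$, $\mathbb F_3=\{0,1,2\}$, $X=\mathbb F_3^d$, $V=\mathbb C^X$ with standard basis $\{\hat y:y\in X\}$. $E^*_{[s,t]}$ is the diagonal projection onto the span of those $\hat y$ with $y$ having exactly $s$ coordinates equal to $1$ and $t$ equal to $2$. Define linear operators on $V$: $L_1\hat y$ is the sum of $\hat z$ over all $z$ obtained from $y$ by changing exactly one coordinate equal to $1$ into $0$ (empty sum $=0$), and $L_2$ similarly changes one coordinate $2\mapsto 1$. *)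

From mathcomp Require Import all_boot all_order all_algebra.
Set Implicit Arguments. Unset Strict Implicit. Unset Printing Implicit Defensive.
Import GRing.Theory Num.Theory.
Local Open Scope ring_scope.

(* F_3 = {0,1,2} is modelled by 'I_3; X = F_3^d by {ffun 'I_d -> 'I_3}. *)
Definition X (d : nat) : finType := {ffun 'I_d -> 'I_3}.

(* V = C^X : vectors are finite functions X -> C; v y is the coefficient of \hat y. *)
Definition V (C : numClosedFieldType) (d : nat) := {ffun X d -> C}.

Definition cnt (d : nat) (a : 'I_3) (y : X d) : nat := #|[set i | y i == a]|.

Definition setc (d : nat) (y : X d) (i : 'I_d) (b : 'I_3) : X d :=
  [ffun j => if j == i then b else y j].

Definition step (d : nat) (a b : 'I_3) (y z : X d) : bool :=
  [exists i, (y i == a) && (z == setc y i b)].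

(* L_{a->b} \hat y = sum of \hat z over z with step a b y z, extended linearly:
   (L v) z = sum_y v(y) [step a b y z]. *)
Definition Lop (C : numClosedFieldType) (d : nat) (a b : 'I_3) (v : V C d) : V C d :=
  [ffun z => \sum_(y : X d | step a b y z) v y].

Definition L1 (C : numClosedFieldType) (d : nat) (v : V C d) : V C d :=
  Lop (inord 1) (inord 0) v.
Definition L2 (C : numClosedFieldType) (d : nat) (v : V C d) : V C d :=
  Lop (inord 2) (inord 1) v.

Definition inEst (C : numClosedFieldType) (d s t : nat) (v : V C d) : Prop :=
  forall y : X d, v y != 0 -> cnt (inord 1) y = s /\ cnt (inord 2) y = t.

(* L_{a->b} and L_{b->a} are adjoint for the standard Hermitian form, and on a
   vector v supported on the y with cnt a y = p, cnt b y = q their commutator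
   acts as (q - p).  If L_{a->b} v = 0 this gives
   (q - p) <v, v> = <L_{b->a} v, L_{b->a} v> >= 0, hence p <= q.  With
   (a, b) = (1, 0) this is s <= r, with (a, b) = (2, 1) it is t <= s; the rest
   is arithmetic with r + s + t = d. *)
From mathcomp Require Import all_boot all_order all_algebra.
From mathcomp Require Import zify.
Import GRing.Theory Num.Theory.
Local Open Scope ring_scope.

Lemma ffun_neq0P {aT : finType} {R : nmodType} (f : {ffun aT -> R}) :
  f != 0 -> exists x, f x != 0.
Proof.
move=> f0; apply/existsP; apply: contraNT f0 => /existsPn f0.
by apply/eqP/ffunP=> x; rewrite ffunE; apply/eqP; have := f0 x; rewrite negbK.
Qed.

Section Substitution.
Variable d : nat.
Implicit Types (y z : X d) (i j : 'I_d) (a b : 'I_3).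

Lemma setcE y i b j : setc y i b j = if j == i then b else y j.
Proof. by rewrite ffunE. Qed.

Lemma setc_id y i : setc y i (y i) = y.
Proof. by apply/ffunP=> j; rewrite setcE; case: eqP => // ->. Qed.

Lemma setcK y i a b : setc (setc y i a) i b = setc y i b.
Proof. by apply/ffunP=> k; rewrite !setcE; case: eqP. Qed.

Lemma setcC y i j a b : i != j ->
  setc (setc y i a) j b = setc (setc y j b) i a.
Proof.
move=> ij; apply/ffunP=> k; rewrite !setcE.
case: (eqVneq k j) => [kj|kj]; case: (eqVneq k i) => [ki|ki] //.
by move: ij; rewrite -ki -kj eqxx.
Qed.

Lemma step_sym a b y z : step a b y z = step b a z y.
Proof.
suff imp a' b' y' z' : step a' b' y' z' -> step b' a' z' y'.
  by apply/idP/idP; apply: imp.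
case/existsP=> i /andP[/eqP yi /eqP ->]; apply/existsP; exists i.
by rewrite setcE !eqxx /= setcK -yi setc_id.
Qed.

Lemma cnt_partition y : (cnt (inord 0) y + cnt (inord 1) y + cnt (inord 2) y)%N = d.
Proof.
have cntE a : cnt a y = (\sum_i (y i == a))%N.
  rewrite /cnt cardsE -sum1_card big_mkcond /=; apply: eq_bigr => i _.
  by change (i \in _) with (y i == a); case: (y i == a).
rewrite !cntE -!big_split /= -[in RHS](card_ord d) -sum1_card.
apply: eq_bigr => i _.
by case: (y i) => [[|[|[|k]]] Hk] //=; rewrite -!val_eqE /= !inordK.
Qed.

End Substitution.

Arguments cnt_partition {d}.

Section RaisingLowering.
Variables (C : numClosedFieldType) (d : nat).
Implicit Types (v w : V C d) (y z : X d) (a b : 'I_3).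

Definition dotV v w : C := \sum_y v y * (w y)^*.

Lemma dotV_ge0 v : 0 <= dotV v v.
Proof. by apply: sumr_ge0 => y _; apply: mul_conjC_ge0. Qed.

Lemma dotV_gt0 v : v != 0 -> 0 < dotV v v.
Proof.
case/ffun_neq0P=> z vz0; rewrite /dotV (bigD1 z) //=.
by rewrite ltr_wpDr ?mul_conjC_gt0 //; apply: sumr_ge0 => y _; apply: mul_conjC_ge0.
Qed.

Lemma dotV_scalel (c : C) (u v w : V C d) :
  (forall y, u y = c * v y) -> dotV u w = c * dotV v w.
Proof. by move=> uE; rewrite /dotV mulr_sumr; apply: eq_bigr => y _; rewrite uE mulrA. Qed.

Lemma Lop_adjoint a b v w : dotV (Lop a b w) v = dotV w (Lop b a v).
Proof.
rewrite /dotV /Lop.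
under eq_bigr do rewrite ffunE big_distrl /= big_mkcond /=.
rewrite exchange_big /=; apply: eq_bigr => y _.
rewrite ffunE rmorph_sum big_distrr /= big_mkcond /= [RHS]big_mkcond.
by apply: eq_bigr => z _; rewrite step_sym.
Qed.

Lemma Lop0 a b : Lop a b (0 : V C d) = 0.
Proof. by apply/ffunP=> z; rewrite !ffunE big1 // => y _; rewrite ffunE. Qed.

Lemma LopE a b v z : a != b -> Lop a b v z = \sum_(i | z i == b) v (setc z i a).
Proof.
move=> ab; rewrite ffunE.
have inj : {in [pred i | z i == b] &, injective (fun i => setc z i a)}.
  move=> i j /eqP zi /eqP zj /= /(congr1 (fun f : X d => f i)).
  rewrite !setcE eqxx; case: eqP => [//|_].
  by rewrite zi => /eqP; rewrite (negbTE ab).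
rewrite -(big_imset _ inj) /=; apply: eq_bigl => y.
apply/existsP/imsetP => [[i /andP[/eqP yi /eqP ->]]|[i]].
  by exists i; [rewrite inE setcE eqxx | rewrite setcK -yi setc_id].
rewrite inE => /eqP zi ->; exists i.
by rewrite setcE !eqxx /= setcK -zi setc_id.
Qed.

Lemma Lop_setc a b v z i : a != b -> z i = b ->
  Lop b a v (setc z i a) = v z + \sum_(j | z j == a) v (setc (setc z i a) j b).
Proof.
move=> ab zi; rewrite LopE 1?eq_sym // (bigD1 i) /=; last by rewrite setcE eqxx.
rewrite setcK -zi setc_id; congr (_ + _); apply: eq_bigl => j.
rewrite setcE; case: (eqVneq j i) => [->|_]; last by rewrite andbT.
by rewrite zi andbF eq_sym (negbTE ab).
Qed.

Lemma sumr_cnt b z (x : C) : \sum_(i | z i == b) x = (cnt b z)%:R * x.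
Proof. by rewrite sumr_const /cnt cardsE mulr_natl. Qed.

(* The double substitutions moving two different coordinates cancel, leaving
   the diagonal terms with i = j. *)
Lemma Lop_commutator a b v z : a != b ->
  Lop a b (Lop b a v) z - Lop b a (Lop a b v) z =
  ((cnt b z)%:R - (cnt a z)%:R) * v z.
Proof.
move=> ab; rewrite LopE // [Lop b a _ z]LopE 1?eq_sym //.
rewrite (eq_bigr (fun i => v z + \sum_(j | z j == a) v (setc (setc z i a) j b)));
  last by move=> i /eqP zi; rewrite Lop_setc.
rewrite [X in _ - X](eq_bigr (fun i => v z + \sum_(j | z j == b) v (setc (setc z i b) j a)));
  last by move=> i /eqP zi; rewrite Lop_setc 1?eq_sym.
rewrite !big_split /= !sumr_cnt exchange_big /=.
rewrite [X in _ - (_ + X)](eq_bigr (fun j => \sum_(i | z i == b) v (setc (setc z i a) j b))).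
  by rewrite mulrBl opprD addrACA subrr addr0.
move=> i /eqP zi; apply: eq_bigr => j /eqP zj; rewrite setcC //.
by apply: contraNneq ab => ij; rewrite -zi -zj ij.
Qed.

Lemma cnt_le_of_Lop_eq0 a b v p q : a != b -> v != 0 ->
  (forall y, v y != 0 -> cnt a y = p /\ cnt b y = q) ->
  Lop a b v = 0 -> (p <= q)%N.
Proof.
move=> ab v0 supp Lv0.
have LLv z : Lop a b (Lop b a v) z = (q%:R - p%:R) * v z.
  have := Lop_commutator a b v z ab; rewrite Lv0 Lop0 [(0 : V C d) z]ffunE subr0 => ->.
  have [->|vz0] := eqVneq (v z) 0; first by rewrite !mulr0.
  by have [-> ->] := supp z vz0.
have := Lop_adjoint a b v (Lop b a v); rewrite (dotV_scalel _ _ _ _ LLv) => norm_eq.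
have := dotV_ge0 (Lop b a v); rewrite -norm_eq pmulr_lge0 ?dotV_gt0 //.
by rewrite subr_ge0 ler_nat.
Qed.

End RaisingLowering.

Arguments cnt_le_of_Lop_eq0 {C d a b v p q}.

Theorem lemma3p6 (C : numClosedFieldType) (d s t : nat) (v : V C d) :
  v != 0 -> inEst s t v -> L1 v = 0 -> L2 v = 0 ->
  let r : int := d%:Z - s%:Z - t%:Z in
  let m1 : int := r - s%:Z in
  let m2 : int := s%:Z - t%:Z in
  (0 <= m1 /\ 0 <= m2) /\
  (r = m1 + m2 + t%:Z /\ s%:Z = m2 + t%:Z) /\
  (t <= d %/ 3)%N /\
  m1 = d%:Z - 3 * t%:Z - 2 * m2 /\
  m2 <= ((d%:Z - 3 * t%:Z) %/ 2)%Z.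
Proof.
move=> v0 vE L1v L2v r m1 m2.
have [y vy0] := @ffun_neq0P _ _ v v0.
have cnt0 z : v z != 0 -> cnt (inord 0) z = (d - s - t)%N.
  by move=> vz0; have := cnt_partition z; have [-> ->] := vE z vz0; lia.
have neq_inord i j : (i < 3)%N -> (j < 3)%N -> i <> j -> inord i != inord j :> 'I_3.
  by move=> i3 j3 ij; rewrite -val_eqE /= !inordK //; apply/eqP.
have s_le_r : (s <= d - s - t)%N.
  apply: (cnt_le_of_Lop_eq0 (neq_inord 1 0 _ _ _) v0 _ L1v) => // z vz0.
  by have [-> _] := vE z vz0; rewrite cnt0.
have t_le_s : (t <= s)%N.
  apply: (cnt_le_of_Lop_eq0 (neq_inord 2 1 _ _ _) v0 _ L2v) => // z vz0.
  by have [-> ->] := vE z vz0.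
rewrite /m1 /m2 /r; lia.
Qed.
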